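(* Let $a,b>0$, $c\ge 0$, $s_0>1$, and let $(u_0,v_0)$ with $u_0,v_0>0$ satisfy $$u_0^3+cu_0=\frac{a+1}{b}u_0^2+\frac{ac}{b},\qquad v_0=u_0^2+c .$$ Consider, for the parameter $\gamma>0$, the delay differential system $$u'(t)=\gamma\left\{\frac{[u(t)+u_0]^2}{v(t-s_0)+v_0}-b[u(t)+u_0]+a\right\},\qquad v'(t)=\gamma\left\{[u(t-1)+u_0]^2-[v(t)+v_0]+c\right\},$$ which has the equilibrium $(u,v)=(0,0)$. Put $$b_0=b-\frac{2u_0}{v_0},\quad b_1=b_0+1,\quad b_2=\frac{2u_0^3}{v_0^2},\quad \tau=\frac{s_0+1}{2},$$ and let $M(\lambda,\gamma)=\lambda^2+\gamma b_1\lambda+\gamma^2 b_0+\gamma^2 b_2e^{-2\tau\lambda}$ be the characteristic function of the linearization at $0$. (i) Suppose $b_1\neq 0$ and $b_0^2-b_2^2<0$. Let $\delta=b_1^2(b_1^2-4b_0)+4b_2^2$, $\Omega_+=\dfrac{-b_1^2+\sqrt{\delta}}{2b_2}$, let $$\omega_0=\frac{\arccos(\Omega_+)+2\pi j}{2\tau}$$ for some $j\in\mathbb{Z}$, where the branch of $\arccos$ is chosen so that $\omega_0>0$ and $\sin(2\omega_0\tau)$ has the same sign as $b_1$, and let $$\gamma_0=\frac{b_1\omega_0}{b_2\sin(2\omega_0\tau)} .$$ (ii) Alternatively, suppose $b_1=0$ and $b_2>1$, and for some $k\in\mathbb{N}$ let $$\gamma_0=\frac{k\pi}{\tau\sqrt{b_2-1}},\qquad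 \omega_0=\frac{k\pi}{\tau}.$$ In either case the system undergoes a Hopf bifurcation at $\gamma=\gamma_0$ with frequency $\omega_0$: $\lambda=i\omega_0$ is a root of $M(\lambda,\gamma_0)=0$, this root is simple, the transversality condition $$\operatorname{Re}\left(\frac{d\lambda}{d\gamma}\right)\Big|_{\lambda=i\omega_0,\ \gamma=\gamma_0}=\frac{4\tau\gamma_0\omega_0^4+2\tau\gamma_0^3\omega_0^2(b_1^2-2b_0)}{(\gamma_0^2b_1-2\gamma_0\tau\omega_0^2+2\gamma_0^3\tau b_0)^2+(2\gamma_0\omega_0+2\gamma_0^2\tau b_1\omega_0)^2}>0$$ holds (where $\lambda(\gamma)$ is the root branch through $i\omega_0$), and no $ni\omega_0$ with $n\in\mathbb{Z}\setminus\{\pm1\}$ is a root of $M(\lambda,\gamma_0)=0$.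
   Context: The characteristic function $M(\lambda,\gamma)$ is the determinant of the characteristic matrix $\Delta(\lambda,\gamma)=\lambda I_2-\gamma(A+e^{-\lambda}B_1+e^{-\lambda s_0}B_2)$, where $A=\begin{pmatrix}\frac{2u_0}{v_0}-b&0\\0&-1\end{pmatrix}$, $B_1=\begin{pmatrix}0&0\\2u_0&0\end{pmatrix}$, $B_2=\begin{pmatrix}0&-\frac{u_0^2}{v_0^2}\\0&0\end{pmatrix}$ are the partial Jacobians of the right-hand side at $0$ with respect to the undelayed state, the state delayed by $1$, and the state delayed by $s_0$, respectively. *)

From Stdlib Require Import Reals ZArith.
From Coquelicot Require Import Coquelicot.
Open Scope R_scope.

Definition Cexp (z : C) : C :=
  (exp (Re z) * cos (Im z), exp (Re z) * sin (Im z)).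

Definition b0 (b u0 v0 : R) : R := b - 2 * u0 / v0.
Definition b1 (b u0 v0 : R) : R := b0 b u0 v0 + 1.
Definition b2 (u0 v0 : R) : R := 2 * u0 ^ 3 / v0 ^ 2.
Definition tau (s0 : R) : R := (s0 + 1) / 2.

(* Characteristic function of the linearization at 0:
   M(lam, g) = lam^2 + g b1 lam + g^2 b0 + g^2 b2 e^{-2 tau lam}
   (= det (lam I - g (A + e^{-lam} B1 + e^{-lam s0} B2))). *)
Definition M_char (B0 B1 B2 T : R) (lam : C) (g : R) : C :=
  (lam * lam + RtoC (g * B1) * lam + RtoC (g ^ 2 * B0)
   + RtoC (g ^ 2 * B2) * Cexp (RtoC (- (2 * T)) * lam))%C.

Definition hopf_case_i (B0 B1 B2 T omega0 gamma0 : R) : Prop :=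
  B1 <> 0 /\ B0 ^ 2 - B2 ^ 2 < 0 /\
  let delta := B1 ^ 2 * (B1 ^ 2 - 4 * B0) + 4 * B2 ^ 2 in
  let Omega := (- B1 ^ 2 + sqrt delta) / (2 * B2) in
  exists (j : Z) (theta : R),
    (theta = acos Omega \/ theta = - acos Omega) /\
    omega0 = (theta + 2 * PI * IZR j) / (2 * T) /\
    0 < omega0 /\
    0 < B1 * sin (2 * omega0 * T) /\
    gamma0 = B1 * omega0 / (B2 * sin (2 * omega0 * T)).

Definition hopf_case_ii (B1 B2 T omega0 gamma0 : R) : Prop :=
  B1 = 0 /\ 1 < B2 /\
  exists k : nat, (0 < k)%nat /\
    gamma0 = INR k * PI / (T * sqrt (B2 - 1)) /\
    omega0 = INR k * PI / T.

Definition transversality_value (B0 B1 T omega0 gamma0 : R) : R :=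
  (4 * T * gamma0 * omega0 ^ 4
   + 2 * T * gamma0 ^ 3 * omega0 ^ 2 * (B1 ^ 2 - 2 * B0)) /
  ((gamma0 ^ 2 * B1 - 2 * gamma0 * T * omega0 ^ 2 + 2 * gamma0 ^ 3 * T * B0) ^ 2
   + (2 * gamma0 * omega0 + 2 * gamma0 ^ 2 * T * B1 * omega0) ^ 2).

Definition root_branch (B0 B1 B2 T omega0 gamma0 : R) (lam : R -> C) : Prop :=
  lam gamma0 = (0, omega0) /\
  exists eps : R, 0 < eps /\
    forall g : R, Rabs (g - gamma0) < eps -> M_char B0 B1 B2 T (lam g) g = 0%C.

From Stdlib Require Import Reals ZArith Lra Lia Psatz ClassicalEpsilon.
From Coquelicot Require Import Coquelicot.
Open Scope R_scope.

(* On the imaginary axis the equation M(i w, g) = 0 splits into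
     g^2 b2 cos (2 tau w) = w^2 - g^2 b0   and   g^2 b2 sin (2 tau w) = g b1 w,
   and both choices of (omega0, gamma0) solve it; in case (i) because Omega+ is the
   root in [-1, 1] of b2^2 (1 - Omega^2) = b1^2 (b0 + b2 Omega).  Squaring and adding,
   w^2 (w^2 + g^2 (b1^2 - 2 b0)) = g^4 (b2^2 - b0^2) > 0.  Hence two roots i w, i w'
   satisfy (w^2 - w'^2) (w^2 + w'^2 + g^2 (b1^2 - 2 b0)) = 0 with a positive second
   factor, which excludes the resonant roots n i omega0; the same positivity makes
   dM/dlambda (i omega0, gamma0) nonzero and the transversality value positive.  The
   implicit function theorem, proved by iterating the contraction
   lambda |-> lambda - M(lambda, g) / dM/dlambda (i omega0, gamma0), gives the root branch,
   and differentiating M(lambda(g), g) = 0 yields lambda' = - (dM/dgamma) / (dM/dlambda). *)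

(** * Elementary estimates for exp, sin and cos *)

Lemma Rabs_le_derive_bound (f df : R -> R) (x K : R) :
  (forall c, is_derive f c (df c)) -> f 0 = 0 ->
  (forall c, Rabs c <= Rabs x -> Rabs (df c) <= K) ->
  Rabs (f x) <= K * Rabs x.
Proof.
  intros Hd H0 Hb.
  destruct (MVT_gen f 0 x df) as [c [Hc Hfc]].
  - intros; apply Hd.
  - intros y _. apply continuity_pt_filterlim, (ex_derive_continuous (V := R_NormedModule)).
    eexists; apply Hd.
  - rewrite H0, Rminus_0_r in Hfc. rewrite Hfc, Rminus_0_r, Rabs_mult.
    apply Rmult_le_compat_r; [apply Rabs_pos|]. apply Hb.
    unfold Rmin, Rmax in Hc; destruct (Rle_dec 0 x);
      unfold Rabs; repeat destruct Rcase_abs; lra.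
Qed.

Lemma Rabs_le_derive_bound_sqr (f df : R -> R) (x K : R) :
  (forall c, is_derive f c (df c)) -> f 0 = 0 ->
  (forall c, Rabs c <= Rabs x -> Rabs (df c) <= K * Rabs x) ->
  Rabs (f x) <= K * x ^ 2.
Proof.
  intros Hd H0 Hb.
  rewrite <- Rsqr_pow2, Rsqr_abs. unfold Rsqr. rewrite <- Rmult_assoc.
  exact (Rabs_le_derive_bound f df x _ Hd H0 Hb).
Qed.

Lemma Rabs_sin_le y : Rabs (sin y) <= Rabs y.
Proof.
  rewrite <- (Rmult_1_l (Rabs y)). apply (Rabs_le_derive_bound sin cos).
  - intros; auto_derive; auto; ring.
  - apply sin_0.
  - intros c _. pose proof (COS_bound c). unfold Rabs; destruct Rcase_abs; lra.
Qed.

Lemma Rabs_cos_sub1_le y : Rabs (cos y - 1) <= y ^ 2.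
Proof.
  rewrite <- (Rmult_1_l (y ^ 2)).
  apply (Rabs_le_derive_bound_sqr (fun c => cos c - 1) (fun c => - sin c)).
  - intros; auto_derive; auto; ring.
  - rewrite cos_0; ring.
  - intros c Hc. rewrite Rabs_Ropp, Rmult_1_l. eapply Rle_trans; [apply Rabs_sin_le | exact Hc].
Qed.

Lemma Rabs_sin_sub_le y : Rabs y <= 1 -> Rabs (sin y - y) <= y ^ 2.
Proof.
  intros Hy. rewrite <- (Rmult_1_l (y ^ 2)).
  apply (Rabs_le_derive_bound_sqr (fun c => sin c - c) (fun c => cos c - 1)).
  - intros; auto_derive; auto; ring.
  - rewrite sin_0; ring.
  - intros c Hc. eapply Rle_trans; [apply Rabs_cos_sub1_le|].
    rewrite <- Rsqr_pow2, Rsqr_abs. unfold Rsqr. pose proof (Rabs_pos c). nra.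
Qed.

Lemma Rabs_exp_le_3 x : Rabs x <= 1 -> Rabs (exp x) <= 3.
Proof.
  intros Hx. rewrite Rabs_right by (left; apply exp_pos).
  apply Rle_trans with (exp 1); [|apply exp_le_3].
  assert (Hx1 : x <= 1) by (unfold Rabs in Hx; destruct Rcase_abs; lra).
  destruct (Rle_lt_or_eq_dec x 1 Hx1) as [Hlt | Heq]; [|rewrite Heq; lra].
  left; apply exp_increasing, Hlt.
Qed.

Lemma Rabs_exp_sub1_le x : Rabs x <= 1 -> Rabs (exp x - 1) <= 3 * Rabs x.
Proof.
  intros Hx. apply (Rabs_le_derive_bound (fun c => exp c - 1) exp).
  - intros; auto_derive; auto; ring.
  - rewrite exp_0; ring.
  - intros c Hc. apply Rabs_exp_le_3; lra.
Qed.

Lemma Rabs_exp_sub1_sub_le x : Rabs x <= 1 -> Rabs (exp x - 1 - x) <= 3 * x ^ 2.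
Proof.
  intros Hx. apply (Rabs_le_derive_bound_sqr (fun c => exp c - 1 - c) (fun c => exp c - 1)).
  - intros; auto_derive; auto; ring.
  - rewrite exp_0; ring.
  - intros c Hc. eapply Rle_trans; [apply Rabs_exp_sub1_le; lra|]. lra.
Qed.

(** * Complex numbers and the complex exponential *)

Lemma Rabs_Im_le_Cmod z : Rabs (Im z) <= Cmod z.
Proof.
  eapply Rle_trans; [|apply Rmax_Cmod]. apply Rmax_r.
Qed.

Lemma Cmod_le_Rabs_Re_Im z : Cmod z <= Rabs (Re z) + Rabs (Im z).
Proof.
  pose proof (Cmod_ge_0 z). pose proof (Rabs_pos (Re z)). pose proof (Rabs_pos (Im z)).
  apply Rsqr_incr_0_var; [|lra]. rewrite !Rsqr_pow2, Cmod2_alt.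
  rewrite <- (pow2_abs (Re z)), <- (pow2_abs (Im z)). nra.
Qed.

Lemma Cmod_sub_comm a b : Cmod (a - b) = Cmod (b - a).
Proof. rewrite <- Cmod_opp. f_equal. ring. Qed.

Lemma Cmod_sub_diag a : Cmod (a - a) = 0.
Proof. replace (a - a)%C with (RtoC 0) by ring. apply Cmod_0. Qed.

Lemma Cmod_sub_triangle a b c : Cmod (a - c) <= Cmod (a - b) + Cmod (b - c).
Proof.
  replace (a - c)%C with ((a - b) + (b - c))%C by ring. apply Cmod_triangle.
Qed.

Lemma sqr_sum_pos (p q : R) : (p, q) <> (0, 0) -> 0 < p ^ 2 + q ^ 2.
Proof.
  intros Hpq. pose proof (pow2_ge_0 p). pose proof (pow2_ge_0 q).
  destruct (Req_dec p 0) as [Hp|Hp]; [destruct (Req_dec q 0) as [Hq|Hq]|].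
  - exfalso. apply Hpq. rewrite Hp, Hq. reflexivity.
  - assert (0 < q ^ 2) by (apply pow2_gt_0; exact Hq). lra.
  - assert (0 < p ^ 2) by (apply pow2_gt_0; exact Hp). lra.
Qed.

Lemma Re_opp_div (r t p q : R) : (p, q) <> (0, 0) ->
  Re (- (r, t) / (p, q))%C = - (p * r + q * t) / (p ^ 2 + q ^ 2).
Proof.
  intros Hpq. pose proof (sqr_sum_pos p q Hpq).
  unfold Cdiv, Cinv, Cmult, Copp; simpl. field. lra.
Qed.

Lemma Cexp_add z w : Cexp (z + w) = (Cexp z * Cexp w)%C.
Proof.
  destruct z as [a b], w as [c d]; unfold Cexp, Cmult; simpl.
  rewrite exp_plus, cos_plus, sin_plus. f_equal; ring.
Qed.

Lemma Cmod_Cexp_sub1_sub_le h : Cmod h <= 1 -> Cmod (Cexp h - 1 - h)%C <= 10 * Cmod h ^ 2.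
Proof.
  intros Hh. pose proof (re_le_Cmod h) as Hx. pose proof (Rabs_Im_le_Cmod h) as Hy.
  destruct h as [x y]. simpl in Hx, Hy. set (m := Cmod (x, y)) in *.
  eapply Rle_trans; [apply Cmod_le_Rabs_Re_Im|]. unfold Cexp; simpl.
  replace (exp x * cos y + - (1) + - x) with ((exp x - 1 - x) + exp x * (cos y - 1)) by ring.
  replace (exp x * sin y + - 0 + - y) with ((exp x - 1) * sin y + (sin y - y)) by ring.
  assert (Hx1 : Rabs x <= 1) by lra. assert (Hy1 : Rabs y <= 1) by lra.
  pose proof (Rabs_exp_sub1_sub_le x Hx1). pose proof (Rabs_exp_sub1_le x Hx1).
  pose proof (Rabs_exp_le_3 x Hx1). pose proof (Rabs_cos_sub1_le y).
  pose proof (Rabs_sin_sub_le y Hy1). pose proof (Rabs_sin_le y).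
  pose proof (Rabs_pos x). pose proof (Rabs_pos y).
  pose proof (Rabs_pos (cos y - 1)). pose proof (Rabs_pos (exp x - 1)).
  assert (x ^ 2 <= m ^ 2) by (rewrite <- pow2_abs; apply pow_incr; lra).
  assert (y ^ 2 <= m ^ 2) by (rewrite <- pow2_abs; apply pow_incr; lra).
  assert (Rabs x * Rabs y <= m ^ 2) by nra.
  pose proof (Rabs_triang (exp x - 1 - x) (exp x * (cos y - 1))).
  pose proof (Rabs_triang ((exp x - 1) * sin y) (sin y - y)).
  rewrite Rabs_mult in *. nra.
Qed.

Lemma Cmod_Cexp_sub1_le k : Cmod k <= 1 -> Cmod (Cexp k - 1)%C <= 11 * Cmod k.
Proof.
  intros Hk. replace (Cexp k - 1)%C with ((Cexp k - 1 - k) + k)%C by ring.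
  eapply Rle_trans; [apply Cmod_triangle|].
  pose proof (Cmod_Cexp_sub1_sub_le k Hk). pose proof (Cmod_ge_0 k). nra.
Qed.

(** * Strict differentiability *)

Definition is_strict_derive (f : C -> C) (mu D : C) : Prop :=
  forall eps, 0 < eps -> exists delta, 0 < delta /\
    forall l1 l2, Cmod (l1 - mu) < delta -> Cmod (l2 - mu) < delta ->
      Cmod (f l1 - f l2 - D * (l1 - l2))%C <= eps * Cmod (l1 - l2).

Lemma is_strict_derive_Cexp mu : is_strict_derive Cexp mu (Cexp mu).
Proof.
  intros eps Heps. pose proof (Cmod_ge_0 (Cexp mu)) as Hm. set (m := Cmod (Cexp mu)) in Hm.
  set (delta := Rmin (1 / 2) (eps / (251 * m + 1))).
  assert (Hd1 : delta <= 1 / 2) by apply Rmin_l.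
  assert (Hd2 : delta * (251 * m + 1) <= eps) by (apply Rle_div_r; [lra|apply Rmin_r]).
  exists delta. split; [apply Rmin_pos; apply Rdiv_lt_0_compat; lra|].
  intros l1 l2 H1 H2.
  set (h := (l1 - l2)%C). set (k := (l2 - mu)%C).
  replace (Cexp l1 - Cexp l2 - Cexp mu * h)%C
    with (Cexp mu * (Cexp k * (Cexp h - 1 - h) + h * (Cexp k - 1)))%C.
  2:{ replace l1 with (mu + k + h)%C at 1 by (unfold h, k; ring).
      replace l2 with (mu + k)%C at 1 by (unfold k; ring).
      rewrite !Cexp_add. ring. }
  pose proof (Cmod_sub_triangle l1 mu l2) as Hh. rewrite (Cmod_sub_comm mu l2) in Hh. fold h in Hh.
  pose proof (Cmod_ge_0 h). pose proof (Cmod_ge_0 k).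
  assert (Hh1 : Cmod h <= 1) by lra. assert (Hk1 : Cmod k <= 1) by (unfold k; lra).
  pose proof (Cmod_Cexp_sub1_sub_le h Hh1) as Eh. pose proof (Cmod_Cexp_sub1_le k Hk1) as Ek.
  assert (Ck : Cmod (Cexp k) <= 12).
  { replace (Cexp k) with ((Cexp k - 1) + 1)%C by ring.
    eapply Rle_trans; [apply Cmod_triangle|]. rewrite Cmod_1. lra. }
  assert (Hsum : Cmod (Cexp k * (Cexp h - 1 - h) + h * (Cexp k - 1))%C <= 251 * delta * Cmod h).
  { eapply Rle_trans; [apply Cmod_triangle|]. rewrite !Cmod_mult.
    pose proof (Cmod_ge_0 (Cexp h - 1 - h)). pose proof (Cmod_ge_0 (Cexp k - 1)).
    assert (Cmod (Cexp k) * Cmod (Cexp h - 1 - h) <= 12 * (10 * Cmod h ^ 2))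
      by (apply Rmult_le_compat; auto using Cmod_ge_0).
    assert (Cmod h * Cmod (Cexp k - 1) <= Cmod h * (11 * delta)) by (unfold k in *; nra).
    nra. }
  rewrite Cmod_mult. fold m. nra.
Qed.

Lemma is_strict_derive_comp_scal (f : C -> C) (a mu D : C) :
  is_strict_derive f (a * mu)%C D -> is_strict_derive (fun l => f (a * l)%C) mu (a * D)%C.
Proof.
  intros Hf eps Heps. set (A := Cmod a + 1).
  assert (HA : 1 <= A) by (pose proof (Cmod_ge_0 a); unfold A; lra).
  destruct (Hf (eps / A)) as [delta [Hdelta Hd]]; [apply Rdiv_lt_0_compat; lra|].
  exists (delta / A). split; [apply Rdiv_lt_0_compat; lra|].
  assert (Hscal : forall l, Cmod (l - mu) < delta / A -> Cmod (a * l - a * mu) < delta).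
  { intros l Hl. apply Rlt_div_r in Hl; [|lra].
    replace (a * l - a * mu)%C with (a * (l - mu))%C by ring. rewrite Cmod_mult.
    unfold A in Hl. pose proof (Cmod_ge_0 (l - mu)). nra. }
  intros l1 l2 H1 H2. specialize (Hd _ _ (Hscal l1 H1) (Hscal l2 H2)).
  replace (a * D * (l1 - l2))%C with (D * (a * l1 - a * l2))%C by ring.
  eapply Rle_trans; [exact Hd|].
  replace (a * l1 - a * l2)%C with (a * (l1 - l2))%C by ring. rewrite Cmod_mult.
  pose proof (Cmod_ge_0 (l1 - l2)). pose proof (Cmod_ge_0 a).
  replace (eps / A * (Cmod a * Cmod (l1 - l2))) with (eps * Cmod (l1 - l2) * (Cmod a / A))
    by (field; lra).
  rewrite <- (Rmult_1_r (eps * Cmod (l1 - l2))) at 2.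
  apply Rmult_le_compat_l; [nra|]. apply Rmult_le_reg_r with A; [lra|].
  unfold Rdiv. rewrite Rmult_assoc, Rinv_l by lra. unfold A; lra.
Qed.

Lemma is_strict_derive_is_derive (f : C -> C) (mu D : C) :
  is_strict_derive f mu D -> is_derive (K := C_AbsRing) (V := C_NormedModule) f mu D.
Proof.
  intros Hf. split; [apply is_linear_scal_l|].
  intros x Hx.
  apply (is_filter_lim_locally_unique (K := C_AbsRing) (V := AbsRing_NormedModule C_AbsRing)) in Hx.
  subst x. intros eps.
  apply (locally_le_locally_norm (K := C_AbsRing) (V := AbsRing_NormedModule C_AbsRing)).
  destruct (Hf eps (cond_pos eps)) as [delta [Hdelta Hd]].
  exists (mkposreal delta Hdelta). intros y Hy.
  assert (Hmu : Cmod (mu - mu) < delta) by (rewrite Cmod_sub_diag; lra).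
  specialize (Hd y mu Hy Hmu). rewrite (Cmult_comm D) in Hd. exact Hd.
Qed.

Lemma is_strict_derive_id mu : is_strict_derive (fun l => l) mu 1.
Proof.
  intros eps Heps. exists 1. split; [lra|]. intros l1 l2 _ _.
  replace (l1 - l2 - 1 * (l1 - l2))%C with (RtoC 0) by ring. rewrite Cmod_0.
  pose proof (Cmod_ge_0 (l1 - l2)). nra.
Qed.

Lemma is_strict_derive_sqr mu : is_strict_derive (fun l => l * l)%C mu (mu + mu)%C.
Proof.
  intros eps Heps. exists (eps / 2). split; [lra|]. intros l1 l2 H1 H2.
  replace (l1 * l1 - l2 * l2 - (mu + mu) * (l1 - l2))%C
    with ((l1 - l2) * ((l1 - mu) + (l2 - mu)))%C by ring.
  rewrite Cmod_mult, Rmult_comm. apply Rmult_le_compat_r; [apply Cmod_ge_0|].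
  eapply Rle_trans; [apply Cmod_triangle|]. lra.
Qed.

(* Strict differentiability in the first variable, uniform in the parameter: this is what
   makes the Newton map a contraction near (mu, g0). *)
Definition is_strict_derive_unif (F : C -> R -> C) (mu : C) (g0 : R) (D : C) : Prop :=
  forall eps, 0 < eps -> exists delta, 0 < delta /\
    forall l1 l2 g, Cmod (l1 - mu) < delta -> Cmod (l2 - mu) < delta -> Rabs (g - g0) < delta ->
      Cmod (F l1 g - F l2 g - D * (l1 - l2))%C <= eps * Cmod (l1 - l2).

Section StrictDeriveUnif.
Variables (mu : C) (g0 : R).

Lemma is_strict_derive_unif_plus (F1 F2 : C -> R -> C) (D1 D2 : C) :
  is_strict_derive_unif F1 mu g0 D1 -> is_strict_derive_unif F2 mu g0 D2 ->
  is_strict_derive_unif (fun l g => F1 l g + F2 l g)%C mu g0 (D1 + D2)%C.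
Proof.
  intros H1 H2 eps Heps.
  destruct (H1 (eps / 2)) as [d1 [Hd1 E1]]; [lra|].
  destruct (H2 (eps / 2)) as [d2 [Hd2 E2]]; [lra|].
  exists (Rmin d1 d2). split; [apply Rmin_pos; auto|].
  intros l1 l2 g Hl1 Hl2 Hg.
  pose proof (Rmin_l d1 d2). pose proof (Rmin_r d1 d2).
  specialize (E1 l1 l2 g ltac:(lra) ltac:(lra) ltac:(lra)).
  specialize (E2 l1 l2 g ltac:(lra) ltac:(lra) ltac:(lra)).
  replace (F1 l1 g + F2 l1 g - (F1 l2 g + F2 l2 g) - (D1 + D2) * (l1 - l2))%C
    with ((F1 l1 g - F1 l2 g - D1 * (l1 - l2)) + (F2 l1 g - F2 l2 g - D2 * (l1 - l2)))%C by ring.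
  eapply Rle_trans; [apply Cmod_triangle|]. lra.
Qed.

Lemma is_strict_derive_unif_const (c : R -> C) :
  is_strict_derive_unif (fun _ g => c g) mu g0 0.
Proof.
  intros eps Heps. exists 1. split; [lra|]. intros l1 l2 g _ _ _.
  replace (c g - c g - 0 * (l1 - l2))%C with (RtoC 0) by ring. rewrite Cmod_0.
  pose proof (Cmod_ge_0 (l1 - l2)). nra.
Qed.

Lemma is_strict_derive_unif_lift (f : C -> C) (D : C) :
  is_strict_derive f mu D -> is_strict_derive_unif (fun l _ => f l) mu g0 D.
Proof.
  intros Hf eps Heps. destruct (Hf eps Heps) as [delta [Hdelta Hd]].
  exists delta. split; auto.
Qed.

Lemma is_strict_derive_unif_scal (s : R -> R) (f : C -> C) (D : C) :
  continuous s g0 -> is_strict_derive f mu D ->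
  is_strict_derive_unif (fun l g => RtoC (s g) * f l)%C mu g0 (RtoC (s g0) * D)%C.
Proof.
  intros Hs Hf eps Heps.
  set (S := Rabs (s g0) + 1). set (K := Cmod D + 1).
  assert (HS : 1 <= S) by (pose proof (Rabs_pos (s g0)); unfold S; lra).
  assert (HK : 1 <= K) by (pose proof (Cmod_ge_0 D); unfold K; lra).
  destruct (Hf (eps / (2 * S))) as [d1 [Hd1 E1]]; [apply Rdiv_lt_0_compat; lra|].
  assert (He2 : 0 < Rmin 1 (eps / (2 * K))) by (apply Rmin_pos; [lra|apply Rdiv_lt_0_compat; lra]).
  apply filterlim_locally with (eps := mkposreal _ He2) in Hs. destruct Hs as [d2 E2].
  exists (Rmin d1 d2). split; [apply Rmin_pos; [auto|apply cond_pos]|].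
  intros l1 l2 g Hl1 Hl2 Hg.
  pose proof (Rmin_l d1 d2). pose proof (Rmin_r d1 d2).
  specialize (E1 l1 l2 ltac:(lra) ltac:(lra)).
  assert (Hsg : Rabs (s g - s g0) < Rmin 1 (eps / (2 * K)))
    by (apply (E2 g); change (Rabs (g - g0) < d2); lra).
  pose proof (Rmin_l 1 (eps / (2 * K))). pose proof (Rmin_r 1 (eps / (2 * K))).
  replace (RtoC (s g) * f l1 - RtoC (s g) * f l2 - RtoC (s g0) * D * (l1 - l2))%C
    with (RtoC (s g) * (f l1 - f l2 - D * (l1 - l2)) + RtoC (s g - s g0) * D * (l1 - l2))%C
    by (rewrite RtoC_minus; ring).
  eapply Rle_trans; [apply Cmod_triangle|]. rewrite !Cmod_mult, !Cmod_R.
  set (h := Cmod (l1 - l2)). assert (Hh : 0 <= h) by apply Cmod_ge_0.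
  assert (Rabs (s g) <= S).
  { unfold S. replace (s g) with ((s g - s g0) + s g0) by ring.
    eapply Rle_trans; [apply Rabs_triang|]. lra. }
  assert (Rabs (s g) * Cmod (f l1 - f l2 - D * (l1 - l2)) <= eps / 2 * h).
  { apply Rle_trans with (S * (eps / (2 * S) * h)).
    - apply Rmult_le_compat; auto using Rabs_pos, Cmod_ge_0.
    - right. field. lra. }
  assert (Rabs (s g - s g0) * Cmod D * h <= eps / 2 * h).
  { apply Rmult_le_compat_r; auto.
    apply Rle_trans with (eps / (2 * K) * K).
    - apply Rmult_le_compat; auto using Rabs_pos, Cmod_ge_0; [lra | unfold K; lra].
    - right. field. lra. }
  lra.
Qed.

End StrictDeriveUnif.

(** * Derivatives of complex-valued functions of a real variable *)

Lemma norm_C_R (z : C) : @norm R_AbsRing C_R_NormedModule z = Cmod z.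
Proof.
  destruct z as [a b]. cbn. unfold prod_norm, Cmod. cbn.
  rewrite !Rmult_1_r, <- !Rabs_mult, !Rabs_right; try reflexivity; apply Rle_ge, Rle_0_sqr.
Qed.

Lemma is_derive_RC_iff (f : R -> C) (x : R) (l : C) :
  is_derive (K := R_AbsRing) (V := C_R_NormedModule) f x l <->
  (forall eps, 0 < eps -> exists delta, 0 < delta /\ forall y, Rabs (y - x) < delta ->
     Cmod (f y - f x - RtoC (y - x) * l)%C <= eps * Rabs (y - x)).
Proof.
  split.
  - intros [_ H] eps Heps.
    specialize (H x (fun P HP => HP) (mkposreal eps Heps)).
    apply (locally_norm_le_locally (K := R_AbsRing) (V := AbsRing_NormedModule R_AbsRing)) in H.
    destruct H as [delta Hd]. exists delta. split; [apply cond_pos|].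
    intros y Hy. specialize (Hd y Hy). simpl in Hd. rewrite scal_R_Cmult, norm_C_R in Hd. exact Hd.
  - intros H. split; [apply is_linear_scal_l|].
    intros x' Hx'.
    apply (is_filter_lim_locally_unique (K := R_AbsRing) (V := AbsRing_NormedModule R_AbsRing)) in Hx'.
    subst x'. intros eps.
    apply (locally_le_locally_norm (K := R_AbsRing) (V := AbsRing_NormedModule R_AbsRing)).
    destruct (H eps (cond_pos eps)) as [delta [Hdelta Hd]].
    exists (mkposreal delta Hdelta). intros y Hy.
    rewrite scal_R_Cmult, norm_C_R. exact (Hd y Hy).
Qed.

Lemma is_derive_RC_of_sqr_remainder (f : R -> C) (x K : R) (l : C) :
  (forall y, Cmod (f y - f x - RtoC (y - x) * l)%C <= K * (y - x) ^ 2) ->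
  is_derive (K := R_AbsRing) (V := C_R_NormedModule) f x l.
Proof.
  intros Hf. apply is_derive_RC_iff. intros eps Heps.
  set (K' := Rabs K + 1). assert (HK : 1 <= K') by (pose proof (Rabs_pos K); unfold K'; lra).
  exists (eps / K'). split; [apply Rdiv_lt_0_compat; lra|]. intros y Hy.
  apply Rlt_div_r in Hy; [|lra].
  eapply Rle_trans; [apply Hf|].
  rewrite <- pow2_abs. pose proof (Rabs_pos (y - x)). pose proof (Rle_abs K).
  unfold K' in Hy. nra.
Qed.

(** * Contraction mapping and implicit function theorems *)

Lemma geom_half_lt (c eps : R) : 0 <= c -> 0 < eps ->
  exists N, forall n, (N <= n)%nat -> c * (/ 2) ^ n < eps.
Proof.
  intros Hc Heps.
  destruct (pow_lt_1_zero (/ 2) ltac:(rewrite Rabs_right; lra) (eps / (c + 1)))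
    as [N HN]; [apply Rdiv_lt_0_compat; lra|].
  exists N. intros n Hn. specialize (HN n Hn).
  assert (Hp : 0 <= (/ 2) ^ n) by (apply pow_le; lra).
  rewrite Rabs_right in HN by lra. apply Rlt_div_r in HN; [|lra]. nra.
Qed.

Section Contraction.
Variables (Phi : C -> C) (mu : C) (r : R).
Hypothesis r_ge0 : 0 <= r.
Hypothesis Phi_ball : forall l, Cmod (l - mu) <= r -> Cmod (Phi l - mu) <= r.
Hypothesis Phi_contract : forall l1 l2, Cmod (l1 - mu) <= r -> Cmod (l2 - mu) <= r ->
  Cmod (Phi l1 - Phi l2) <= / 2 * Cmod (l1 - l2).

Let x (n : nat) : C := Nat.iter n Phi mu.

Lemma iter_in_ball n : Cmod (x n - mu) <= r.
Proof.
  induction n as [|n IH]; [|apply Phi_ball, IH].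
  simpl. rewrite Cmod_sub_diag. exact r_ge0.
Qed.

Lemma iter_step_le n : Cmod (x (S n) - x n) <= r * (/ 2) ^ n.
Proof.
  induction n as [|n IH].
  - rewrite Rmult_1_r. apply Phi_ball. simpl.
    rewrite Cmod_sub_diag. exact r_ge0.
  - change (Cmod (Phi (x (S n)) - Phi (x n)) <= r * (/ 2) ^ S n).
    eapply Rle_trans; [exact (Phi_contract _ _ (iter_in_ball (S n)) (iter_in_ball n))|].
    simpl pow. lra.
Qed.

Lemma iter_dist_le n k : Cmod (x (n + k)%nat - x n) <= 2 * r * (/ 2) ^ n - 2 * r * (/ 2) ^ (n + k).
Proof.
  induction k as [|k IH].
  - rewrite Nat.add_0_r, Cmod_sub_diag. lra.
  - rewrite Nat.add_succ_r.
    replace (x (S (n + k)) - x n)%C with ((x (S (n + k)) - x (n + k)%nat) + (x (n + k)%nat - x n))%C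
      by ring.
    eapply Rle_trans; [apply Cmod_triangle|]. pose proof (iter_step_le (n + k)). simpl pow. lra.
Qed.

Lemma iter_dist_tail_le n m : (n <= m)%nat -> Cmod (x m - x n) <= 2 * r * (/ 2) ^ n.
Proof.
  intros Hnm. replace m with (n + (m - n))%nat by lia.
  pose proof (iter_dist_le n (m - n)). pose proof (pow_le (/ 2) (n + (m - n)) ltac:(lra)). nra.
Qed.

Lemma iter_cvg :
  exists L, forall eps, 0 < eps -> exists N, forall n, (N <= n)%nat -> Cmod (x n - L) < eps.
Proof.
  destruct (filterlim_locally_cauchy
    (U := CompleteNormedModule.CompleteSpace C_AbsRing C_CompleteNormedModule)
    (F := eventually) x) as [[L HL] _].
  - intros eps. destruct (geom_half_lt (4 * r) eps ltac:(lra) (cond_pos eps)) as [N HN].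
    exists (fun n => (N <= n)%nat). split; [exists N; auto|].
    intros u v Hu Hv. apply (norm_compat1 (V := C_NormedModule)).
    change (Cmod (x v - x u) < eps).
    eapply Rle_lt_trans; [apply (Cmod_sub_triangle _ (x N))|]. rewrite (Cmod_sub_comm (x N)).
    pose proof (iter_dist_tail_le N v Hv). pose proof (iter_dist_tail_le N u Hu).
    specialize (HN N (le_n N)). lra.
  - exists L. intros eps Heps.
    destruct (proj1 (filterlim_locally_ball_norm (K := C_AbsRing) (U := C_CompleteNormedModule)
      (F := eventually) x L) HL (mkposreal eps Heps)) as [N HN].
    exists N. exact HN.
Qed.

Lemma contraction_fixed_point : exists l, Cmod (l - mu) <= r /\ Phi l = l.
Proof.
  destruct iter_cvg as [L HL]. exists L.
  assert (HLmu : Cmod (L - mu) <= r).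
  { apply Rle_plus_epsilon. intros eps Heps. destruct (HL eps Heps) as [N HN].
    specialize (HN N (le_n N)). pose proof (iter_in_ball N).
    pose proof (Cmod_sub_triangle L (x N) mu). rewrite Cmod_sub_comm in HN. lra. }
  split; [exact HLmu|].
  apply Ceq_minus, Cmod_eq_0, Rle_antisym; [|apply Cmod_ge_0].
  apply Rle_plus_epsilon. intros eps Heps. destruct (HL (eps / 2)) as [N HN]; [lra|].
  pose proof (HN N (le_n N)) as H1. pose proof (HN (S N) (le_S _ _ (le_n N))) as H2.
  change (x (S N)) with (Phi (x N)) in H2.
  pose proof (Phi_contract L (x N) HLmu (iter_in_ball N)).
  pose proof (Cmod_sub_triangle (Phi L) (Phi (x N)) L).
  rewrite (Cmod_sub_comm L) in H. pose proof (Cmod_ge_0 (x N - L)). lra.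
Qed.

End Contraction.

Lemma little_o_linear_eq0 (z : C) (x0 : R) :
  (forall eps, 0 < eps -> exists delta, 0 < delta /\ forall y, Rabs (y - x0) < delta ->
     Cmod (RtoC (y - x0) * z) <= eps * Rabs (y - x0)) ->
  z = 0%C.
Proof.
  intros Hz. apply Cmod_eq_0, Rle_antisym; [|apply Cmod_ge_0].
  apply Rle_plus_epsilon. intros eps Heps. destruct (Hz eps Heps) as [delta [Hdelta Hd]].
  specialize (Hd (x0 + delta / 2)). replace (x0 + delta / 2 - x0) with (delta / 2) in Hd by ring.
  rewrite Cmod_mult, Cmod_R, Rabs_right in Hd by lra.
  specialize (Hd ltac:(lra)).
  assert (Cmod z <= eps) by (apply Rmult_le_reg_l with (delta / 2); lra).
  lra.
Qed.

Section ImplicitFunction.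
Variables (F : C -> R -> C) (mu : C) (g0 : R) (D0 Fg : C).
Hypothesis D0_neq0 : D0 <> 0%C.
Hypothesis F_root : F mu g0 = 0%C.
Hypothesis F_lam : is_strict_derive_unif F mu g0 D0.
Hypothesis F_gam : is_derive (K := R_AbsRing) (V := C_R_NormedModule) (fun g => F mu g) g0 Fg.

Lemma implicit_linearization (lam : R -> C) (C0 e : R) : 0 < e -> 0 <= C0 ->
  (forall g, Rabs (g - g0) < e -> F (lam g) g = 0%C) ->
  (forall g, Rabs (g - g0) < e -> Cmod (lam g - mu) <= C0 * Rabs (g - g0)) ->
  forall eps, 0 < eps -> exists delta, 0 < delta /\ forall g, Rabs (g - g0) < delta ->
    Cmod (D0 * (lam g - mu) + RtoC (g - g0) * Fg)%C <= eps * Rabs (g - g0).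
Proof.
  intros He HC0 Hroot Hlip eps Heps.
  destruct (F_lam (eps / (2 * (C0 + 1)))) as [d1 [Hd1 E1]]; [apply Rdiv_lt_0_compat; lra|].
  destruct (proj1 (is_derive_RC_iff _ _ _) F_gam (eps / 2)) as [d2 [Hd2 E2]]; [lra|].
  set (delta := Rmin e (Rmin (d1 / (C0 + 1)) d2)).
  exists delta. split; [repeat apply Rmin_pos; auto; apply Rdiv_lt_0_compat; lra|].
  intros g Hg.
  assert (Hge : Rabs (g - g0) < e) by (eapply Rlt_le_trans; [exact Hg|apply Rmin_l]).
  assert (Hg1 : Rabs (g - g0) < d1 / (C0 + 1))
    by (eapply Rlt_le_trans; [exact Hg|eapply Rle_trans; [apply Rmin_r|apply Rmin_l]]).
  assert (Hg2 : Rabs (g - g0) < d2)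
    by (eapply Rlt_le_trans; [exact Hg|eapply Rle_trans; [apply Rmin_r|apply Rmin_r]]).
  pose proof (Rabs_pos (g - g0)). specialize (Hlip g Hge).
  apply Rlt_div_r in Hg1; [|lra].
  assert (Hmu : Cmod (mu - mu) < d1) by (rewrite Cmod_sub_diag; lra).
  specialize (E1 (lam g) mu g ltac:(nra) Hmu ltac:(nra)). specialize (E2 g Hg2).
  replace (D0 * (lam g - mu) + RtoC (g - g0) * Fg)%C
    with (- (F (lam g) g - F mu g - D0 * (lam g - mu))
          + - (F mu g - F mu g0 - RtoC (g - g0) * Fg))%C
    by (rewrite (Hroot g Hge), F_root; ring).
  eapply Rle_trans; [apply Cmod_triangle|]. rewrite !Cmod_opp.
  assert (eps / (2 * (C0 + 1)) * Cmod (lam g - mu) <= eps / 2 * Rabs (g - g0)).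
  { apply Rle_trans with (eps / (2 * (C0 + 1)) * ((C0 + 1) * Rabs (g - g0))).
    - apply Rmult_le_compat_l; [left; apply Rdiv_lt_0_compat; lra | lra].
    - right. field. lra. }
  lra.
Qed.

Lemma newton_map_contraction : exists d1, 0 < d1 /\
  forall g l1 l2, Rabs (g - g0) < d1 -> Cmod (l1 - mu) < d1 -> Cmod (l2 - mu) < d1 ->
    Cmod ((l1 - F l1 g / D0) - (l2 - F l2 g / D0)) <= / 2 * Cmod (l1 - l2).
Proof.
  pose proof (proj1 (Cmod_gt_0 D0) D0_neq0) as HD0.
  destruct (F_lam (Cmod D0 / 2)) as [d1 [Hd1 E1]]; [lra|].
  exists d1. split; auto. intros g l1 l2 Hg H1 H2.
  replace ((l1 - F l1 g / D0) - (l2 - F l2 g / D0))%C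
    with (- (F l1 g - F l2 g - D0 * (l1 - l2)) / D0)%C by (field; auto).
  rewrite Cmod_div, Cmod_opp by auto. apply Rle_div_l; [exact HD0|].
  specialize (E1 l1 l2 g H1 H2 Hg). lra.
Qed.

Lemma implicit_root_near : exists eta C0, 0 < eta /\ 0 <= C0 /\
  forall g, Rabs (g - g0) < eta -> exists l, F l g = 0%C /\ Cmod (l - mu) <= C0 * Rabs (g - g0).
Proof.
  pose proof (proj1 (Cmod_gt_0 D0) D0_neq0) as HD0.
  destruct newton_map_contraction as [d1 [Hd1 Hcontr]].
  destruct (proj1 (is_derive_RC_iff _ _ _) F_gam 1) as [d2 [Hd2 E2]]; [lra|].
  set (K := Cmod Fg + 1). assert (HK : 1 <= K) by (pose proof (Cmod_ge_0 Fg); unfold K; lra).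
  set (C0 := 2 * K / Cmod D0). assert (HC0 : 0 < C0) by (apply Rdiv_lt_0_compat; lra).
  exists (Rmin d2 (d1 / (C0 + 1))), C0.
  split; [apply Rmin_pos; [|apply Rdiv_lt_0_compat]; lra|]. split; [lra|].
  intros g Hg. pose proof (Rabs_pos (g - g0)).
  assert (Hg2 : Rabs (g - g0) < d2) by (eapply Rlt_le_trans; [exact Hg|apply Rmin_l]).
  assert (Hg1 : Rabs (g - g0) < d1 / (C0 + 1)) by (eapply Rlt_le_trans; [exact Hg|apply Rmin_r]).
  apply Rlt_div_r in Hg1; [|lra].
  assert (Hgd1 : Rabs (g - g0) < d1) by nra.
  assert (Hr : C0 * Rabs (g - g0) < d1) by nra.
  set (r := C0 * Rabs (g - g0)) in *.
  set (Phi := fun l => (l - F l g / D0)%C).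
  assert (Hr0 : 0 <= r) by (unfold r; nra).
  assert (Hmu : Cmod (mu - mu) <= r) by (rewrite Cmod_sub_diag; lra).
  assert (HFmu : Cmod (F mu g) <= K * Rabs (g - g0)).
  { specialize (E2 g Hg2). rewrite F_root in E2.
    replace (F mu g) with ((F mu g - 0 - RtoC (g - g0) * Fg) + RtoC (g - g0) * Fg)%C by ring.
    eapply Rle_trans; [apply Cmod_triangle|]. rewrite Cmod_mult, Cmod_R. unfold K. lra. }
  assert (HPhi_mu : Cmod (Phi mu - mu) <= r / 2).
  { unfold Phi. replace (mu - F mu g / D0 - mu)%C with (- (F mu g / D0))%C by ring.
    rewrite Cmod_opp, Cmod_div by auto.
    replace (r / 2) with (K * Rabs (g - g0) / Cmod D0) by (unfold r, C0; field; lra).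
    apply Rmult_le_compat_r; [left; apply Rinv_0_lt_compat|]; lra. }
  (* The Newton map contracts by 1/2 and moves mu by at most r/2, hence maps the closed
     ball of radius r around mu into itself. *)
  destruct (contraction_fixed_point Phi mu r) as [l [Hl Hfix]].
  - exact Hr0.
  - intros l Hl. eapply Rle_trans; [apply (Cmod_sub_triangle _ (Phi mu))|].
    pose proof (Hcontr g l mu Hgd1 ltac:(lra) ltac:(lra)). fold (Phi l) (Phi mu) in H0. lra.
  - intros l1 l2 H1 H2. apply Hcontr; lra.
  - exists l. split; [|exact Hl].
    unfold Phi in Hfix.
    replace (F l g) with ((l - (l - F l g / D0)) * D0)%C by (field; auto).
    rewrite Hfix. ring.
Qed.

Lemma implicit_function_exists : exists lam : R -> C, lam g0 = mu /\
  (exists e, 0 < e /\ forall g, Rabs (g - g0) < e -> F (lam g) g = 0%C) /\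
  is_derive (K := R_AbsRing) (V := C_R_NormedModule) lam g0 (- Fg / D0)%C.
Proof.
  pose proof (proj1 (Cmod_gt_0 D0) D0_neq0) as HD0.
  destruct implicit_root_near as [eta [C0 [Heta [HC0 Hnear]]]].
  destruct (choice (fun g l =>
    Rabs (g - g0) < eta -> F l g = 0%C /\ Cmod (l - mu) <= C0 * Rabs (g - g0))) as [lam Hlam].
  { intros g. destruct (Rlt_dec (Rabs (g - g0)) eta) as [Hg|Hg].
    - destruct (Hnear g Hg) as [l Hl]. exists l. auto.
    - exists mu. intros Hg'. contradiction. }
  assert (Hlam0 : lam g0 = mu).
  { destruct (Hlam g0) as [_ Hb]; [rewrite Rminus_eq_0, Rabs_R0; lra|].
    rewrite Rminus_eq_0, Rabs_R0, Rmult_0_r in Hb. apply Ceq_minus, Cmod_eq_0.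
    apply Rle_antisym; [exact Hb|apply Cmod_ge_0]. }
  exists lam. split; [exact Hlam0|].
  split; [exists eta; split; [exact Heta|intros g Hg; apply Hlam, Hg]|].
  apply is_derive_RC_iff. intros eps Heps.
  destruct (implicit_linearization lam C0 eta Heta HC0 (fun g Hg => proj1 (Hlam g Hg))
    (fun g Hg => proj2 (Hlam g Hg)) (eps * Cmod D0)) as [delta [Hdelta Hd]]; [nra|].
  exists delta. split; [exact Hdelta|]. intros y Hy. rewrite Hlam0.
  replace (lam y - mu - RtoC (y - g0) * (- Fg / D0))%C
    with ((D0 * (lam y - mu) + RtoC (y - g0) * Fg) / D0)%C by (field; auto).
  rewrite Cmod_div by auto. apply Rle_div_l; [exact HD0|].
  specialize (Hd y Hy). lra.
Qed.

Lemma implicit_function_derive (lam : R -> C) (d : C) : lam g0 = mu ->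
  (exists e, 0 < e /\ forall g, Rabs (g - g0) < e -> F (lam g) g = 0%C) ->
  is_derive (K := R_AbsRing) (V := C_R_NormedModule) lam g0 d ->
  d = (- Fg / D0)%C.
Proof.
  intros Hlam0 [e [He Hroot]] Hder. pose proof (proj1 (is_derive_RC_iff _ _ _) Hder) as Hd.
  rewrite Hlam0 in Hd.
  destruct (Hd 1) as [d1 [Hd1 E1]]; [lra|].
  set (C0 := Cmod d + 1). assert (HC0 : 0 <= C0) by (pose proof (Cmod_ge_0 d); unfold C0; lra).
  assert (Hlip : forall g, Rabs (g - g0) < Rmin e d1 -> Cmod (lam g - mu) <= C0 * Rabs (g - g0)).
  { intros g Hg. specialize (E1 g (Rlt_le_trans _ _ _ Hg (Rmin_r e d1))).
    replace (lam g - mu)%C with ((lam g - mu - RtoC (g - g0) * d) + RtoC (g - g0) * d)%C by ring.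
    eapply Rle_trans; [apply Cmod_triangle|]. rewrite Cmod_mult, Cmod_R. unfold C0.
    pose proof (Rabs_pos (g - g0)). nra. }
  pose proof (implicit_linearization lam C0 (Rmin e d1) (Rmin_pos _ _ He Hd1) HC0
    (fun g Hg => Hroot g (Rlt_le_trans _ _ _ Hg (Rmin_l e d1))) Hlip) as Hlin.
  set (A := Cmod D0 + 1). assert (HA : 1 <= A) by (pose proof (Cmod_ge_0 D0); unfold A; lra).
  assert (Hz : (D0 * d + Fg)%C = 0%C).
  { apply (little_o_linear_eq0 _ g0). intros eps Heps.
    destruct (Hlin (eps / 2)) as [da [Hda Ea]]; [lra|].
    destruct (Hd (eps / (2 * A))) as [db [Hdb Eb]]; [apply Rdiv_lt_0_compat; lra|].
    exists (Rmin da db). split; [apply Rmin_pos; auto|]. intros y Hy.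
    specialize (Ea y (Rlt_le_trans _ _ _ Hy (Rmin_l da db))).
    specialize (Eb y (Rlt_le_trans _ _ _ Hy (Rmin_r da db))).
    replace (RtoC (y - g0) * (D0 * d + Fg))%C
      with ((D0 * (lam y - mu) + RtoC (y - g0) * Fg) - D0 * (lam y - mu - RtoC (y - g0) * d))%C
      by ring.
    eapply Rle_trans; [apply Cmod_triangle|]. rewrite Cmod_opp, Cmod_mult.
    assert (Cmod D0 * Cmod (lam y - mu - RtoC (y - g0) * d) <= eps / 2 * Rabs (y - g0)).
    { apply Rle_trans with (A * (eps / (2 * A) * Rabs (y - g0))).
      - apply Rmult_le_compat; auto using Cmod_ge_0. unfold A; lra.
      - right. field. lra. }
    lra. }
  replace d with ((D0 * d + Fg - Fg) / D0)%C by (field; auto). rewrite Hz. field. auto.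
Qed.

End ImplicitFunction.

(** * The characteristic function *)

Definition M_char_dlam (B1 B2 T : R) (lam : C) (g : R) : C :=
  (lam + lam + RtoC (g * B1) - RtoC (2 * T * g ^ 2 * B2) * Cexp (RtoC (- (2 * T)) * lam))%C.

Definition M_char_dgam (B0 B1 B2 T : R) (lam : C) (g : R) : C :=
  (RtoC B1 * lam + RtoC (2 * g * B0) + RtoC (2 * g * B2) * Cexp (RtoC (- (2 * T)) * lam))%C.

Definition hopf_conditions (B0 B1 B2 T omega0 gamma0 : R) : Prop :=
  M_char B0 B1 B2 T (0, omega0) gamma0 = 0%C /\
  (exists d : C,
     is_derive (K := C_AbsRing) (V := C_NormedModule)
       (fun lam : C => M_char B0 B1 B2 T lam gamma0) (0, omega0) d /\ d <> 0%C) /\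
  (exists lam : R -> C, root_branch B0 B1 B2 T omega0 gamma0 lam /\
     exists d : C, is_derive (K := R_AbsRing) (V := C_R_NormedModule) lam gamma0 d) /\
  (forall (lam : R -> C) (d : C), root_branch B0 B1 B2 T omega0 gamma0 lam ->
     is_derive (K := R_AbsRing) (V := C_R_NormedModule) lam gamma0 d ->
     Re d = transversality_value B0 B1 T omega0 gamma0) /\
  0 < transversality_value B0 B1 T omega0 gamma0 /\
  (forall n : Z, n <> 1%Z -> n <> (-1)%Z ->
     M_char B0 B1 B2 T (0, IZR n * omega0) gamma0 <> 0%C).

Section CharacteristicFunction.
Variables B0 B1 B2 T : R.

Lemma M_char_strict_derive (mu : C) (g0 : R) :
  is_strict_derive_unif (M_char B0 B1 B2 T) mu g0 (M_char_dlam B1 B2 T mu g0).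
Proof.
  set (a := RtoC (- (2 * T))).
  replace (M_char_dlam B1 B2 T mu g0) with
    (mu + mu + RtoC (g0 * B1) * 1 + 0 + RtoC (g0 ^ 2 * B2) * (a * Cexp (a * mu)))%C.
  2:{ unfold M_char_dlam, a. destruct mu, (Cexp _). apply injective_projections; simpl; ring. }
  unfold M_char. fold a.
  repeat apply is_strict_derive_unif_plus.
  - apply is_strict_derive_unif_lift, is_strict_derive_sqr.
  - apply (is_strict_derive_unif_scal _ _ (fun g => g * B1)); [|apply is_strict_derive_id].
    apply (ex_derive_continuous (V := R_NormedModule)). auto_derive. auto.
  - apply (is_strict_derive_unif_const _ _ (fun g => RtoC (g ^ 2 * B0))).
  - apply (is_strict_derive_unif_scal _ _ (fun g => g ^ 2 * B2)).
    + apply (ex_derive_continuous (V := R_NormedModule)). auto_derive. auto.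
    + apply (is_strict_derive_comp_scal Cexp), is_strict_derive_Cexp.
Qed.

Lemma M_char_derive_lam (mu : C) (g : R) :
  is_derive (K := C_AbsRing) (V := C_NormedModule)
    (fun lam => M_char B0 B1 B2 T lam g) mu (M_char_dlam B1 B2 T mu g).
Proof.
  apply is_strict_derive_is_derive. intros eps Heps.
  destruct (M_char_strict_derive mu g eps Heps) as [delta [Hdelta Hd]].
  exists delta. split; auto. intros l1 l2 H1 H2. apply Hd; auto.
  rewrite Rminus_eq_0, Rabs_R0. exact Hdelta.
Qed.

Lemma M_char_derive_gam (lam : C) (g0 : R) :
  is_derive (K := R_AbsRing) (V := C_R_NormedModule)
    (fun g => M_char B0 B1 B2 T lam g) g0 (M_char_dgam B0 B1 B2 T lam g0).
Proof.
  set (E := Cexp (RtoC (- (2 * T)) * lam)).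
  apply (is_derive_RC_of_sqr_remainder _ _ (Cmod (RtoC B0 + RtoC B2 * E))).
  intros g. unfold M_char, M_char_dgam. fold E.
  replace (lam * lam + RtoC (g * B1) * lam + RtoC (g ^ 2 * B0) + RtoC (g ^ 2 * B2) * E
    - (lam * lam + RtoC (g0 * B1) * lam + RtoC (g0 ^ 2 * B0) + RtoC (g0 ^ 2 * B2) * E)
    - RtoC (g - g0) * (RtoC B1 * lam + RtoC (2 * g0 * B0) + RtoC (2 * g0 * B2) * E))%C
    with (RtoC ((g - g0) ^ 2) * (RtoC B0 + RtoC B2 * E))%C
    by (destruct lam, E; apply injective_projections; simpl; ring).
  rewrite Cmod_mult, Cmod_R, Rabs_right by (apply Rle_ge, pow2_ge_0). lra.
Qed.

Lemma Cexp_imag (w : R) :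
  Cexp (RtoC (- (2 * T)) * (0, w))%C = (cos (2 * T * w), - sin (2 * T * w)).
Proof.
  unfold Cexp, Cmult, RtoC; simpl.
  replace (- (2 * T) * 0 - 0 * w) with 0 by ring.
  replace (- (2 * T) * w + 0 * 0) with (- (2 * T * w)) by ring.
  rewrite exp_0, cos_neg, sin_neg, !Rmult_1_l. reflexivity.
Qed.

Lemma M_char_imag (w g : R) : M_char B0 B1 B2 T (0, w) g =
  (- w ^ 2 + g ^ 2 * B0 + g ^ 2 * B2 * cos (2 * T * w), g * B1 * w - g ^ 2 * B2 * sin (2 * T * w)).
Proof.
  unfold M_char. rewrite Cexp_imag. apply injective_projections; simpl; ring.
Qed.

Lemma M_char_imag_eq0 (w g : R) : M_char B0 B1 B2 T (0, w) g = 0%C <->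
  g ^ 2 * B2 * cos (2 * T * w) = w ^ 2 - g ^ 2 * B0 /\ g ^ 2 * B2 * sin (2 * T * w) = g * B1 * w.
Proof.
  rewrite M_char_imag. split.
  - intros H. injection H as H1 H2. lra.
  - intros [H1 H2]. apply injective_projections; simpl; lra.
Qed.

Lemma imag_root_modulus (w g : R) : M_char B0 B1 B2 T (0, w) g = 0%C ->
  (w ^ 2 - g ^ 2 * B0) ^ 2 + g ^ 2 * B1 ^ 2 * w ^ 2 = g ^ 4 * B2 ^ 2.
Proof.
  intros [Hc Hs]%M_char_imag_eq0. pose proof (sin2_cos2 (2 * T * w)) as S. unfold Rsqr in S.
  rewrite <- Hc. replace (g ^ 2 * B1 ^ 2 * w ^ 2) with ((g * B1 * w) ^ 2) by ring. rewrite <- Hs.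
  set (c := cos (2 * T * w)) in *. set (s := sin (2 * T * w)) in *.
  transitivity ((g ^ 2 * B2) ^ 2 * (s * s + c * c)); [ring | rewrite S; ring].
Qed.

Section ImaginaryRoot.
Variables w g : R.
Hypothesis T_pos : 0 < T.
Hypothesis w_pos : 0 < w.
Hypothesis g_pos : 0 < g.
Hypothesis B0_lt_B2 : B0 ^ 2 < B2 ^ 2.
Hypothesis imag_root : M_char B0 B1 B2 T (0, w) g = 0%C.

Lemma imag_root_gap : 0 < w ^ 2 + g ^ 2 * (B1 ^ 2 - 2 * B0).
Proof.
  pose proof (imag_root_modulus w g imag_root) as Hmod.
  assert (Hw2 : 0 < w ^ 2) by (apply pow_lt; lra).
  assert (Hg4 : 0 < g ^ 4) by (apply pow_lt; lra).
  assert (w ^ 2 * (w ^ 2 + g ^ 2 * (B1 ^ 2 - 2 * B0)) = g ^ 4 * (B2 ^ 2 - B0 ^ 2)) by nra.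
  nra.
Qed.

Lemma imag_root_sqr_unique (w' : R) : M_char B0 B1 B2 T (0, w') g = 0%C -> w' ^ 2 = w ^ 2.
Proof.
  intros H'. pose proof (imag_root_modulus w g imag_root) as Hmod.
  pose proof (imag_root_modulus w' g H') as Hmod'. pose proof imag_root_gap.
  assert (Hprod : (w ^ 2 - w' ^ 2) * (w ^ 2 + g ^ 2 * (B1 ^ 2 - 2 * B0) + w' ^ 2) = 0) by nra.
  apply Rmult_integral in Hprod as [Hprod|Hprod]; [lra|].
  pose proof (pow2_ge_0 w'). lra.
Qed.

Lemma imag_root_non_resonance (n : Z) : n <> 1%Z -> n <> (-1)%Z ->
  M_char B0 B1 B2 T (0, IZR n * w) g <> 0%C.
Proof.
  intros Hn1 Hn2 H. apply imag_root_sqr_unique in H.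
  assert (Hn : (IZR n) ^ 2 = 1).
  { assert (0 < w ^ 2) by (apply pow_lt; lra). apply Rmult_eq_reg_r with (w ^ 2); [|lra].
    replace (IZR n ^ 2 * w ^ 2) with ((IZR n * w) ^ 2) by ring. rewrite H. ring. }
  assert (Hz : (n * n)%Z = 1%Z) by (apply eq_IZR; rewrite mult_IZR; simpl in Hn; lra).
  nia.
Qed.

Lemma M_char_dlam_imag_root : M_char_dlam B1 B2 T (0, w) g =
  (g * B1 - 2 * T * w ^ 2 + 2 * T * g ^ 2 * B0, 2 * w + 2 * T * g * B1 * w).
Proof.
  destruct (proj1 (M_char_imag_eq0 w g) imag_root) as [Hc Hs].
  unfold M_char_dlam. rewrite Cexp_imag.
  apply injective_projections; simpl; nra.
Qed.

Lemma M_char_dgam_imag_root : M_char_dgam B0 B1 B2 T (0, w) g = (2 * w ^ 2 / g, - B1 * w).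
Proof.
  destruct (proj1 (M_char_imag_eq0 w g) imag_root) as [Hc Hs].
  unfold M_char_dgam. rewrite Cexp_imag.
  apply injective_projections; simpl; apply Rmult_eq_reg_l with g; try lra.
  field_simplify; lra.
Qed.

Lemma M_char_dlam_imag_root_neq0 : M_char_dlam B1 B2 T (0, w) g <> 0%C.
Proof.
  rewrite M_char_dlam_imag_root. intros H. injection H as Hp Hq.
  pose proof imag_root_gap as Hgap.
  assert (HTgB1 : T * g * B1 = -1).
  { assert (2 * w * (1 + T * g * B1) = 0) by lra.
    apply Rmult_integral in H as [H|H]; lra. }
  assert (0 < T ^ 2 * w ^ 2) by (apply Rmult_lt_0_compat; apply pow_lt; lra).
  assert (T ^ 2 * (w ^ 2 + g ^ 2 * (B1 ^ 2 - 2 * B0)) = - (T ^ 2 * w ^ 2)) by nra.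
  assert (0 < T ^ 2) by (apply pow_lt; lra). nra.
Qed.

Lemma imag_root_transversality :
  Re (- M_char_dgam B0 B1 B2 T (0, w) g / M_char_dlam B1 B2 T (0, w) g)%C =
  transversality_value B0 B1 T w g.
Proof.
  pose proof M_char_dlam_imag_root_neq0 as HD.
  rewrite M_char_dlam_imag_root in *. rewrite M_char_dgam_imag_root, Re_opp_div by exact HD.
  apply sqr_sum_pos in HD. unfold transversality_value.
  replace ((g ^ 2 * B1 - 2 * g * T * w ^ 2 + 2 * g ^ 3 * T * B0) ^ 2
           + (2 * g * w + 2 * g ^ 2 * T * B1 * w) ^ 2)
    with (g ^ 2 * ((g * B1 - 2 * T * w ^ 2 + 2 * T * g ^ 2 * B0) ^ 2
                   + (2 * w + 2 * T * g * B1 * w) ^ 2)) by ring.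
  field. lra.
Qed.

Lemma transversality_value_pos : 0 < transversality_value B0 B1 T w g.
Proof.
  rewrite <- imag_root_transversality.
  pose proof M_char_dlam_imag_root_neq0 as HD.
  rewrite M_char_dlam_imag_root in *. rewrite M_char_dgam_imag_root, Re_opp_div by exact HD.
  apply sqr_sum_pos in HD. apply Rdiv_lt_0_compat; [|exact HD].
  pose proof imag_root_gap. assert (0 < w ^ 2) by (apply pow_lt; lra).
  replace (- ((g * B1 - 2 * T * w ^ 2 + 2 * T * g ^ 2 * B0) * (2 * w ^ 2 / g)
              + (2 * w + 2 * T * g * B1 * w) * (- B1 * w)))
    with (2 * T * w ^ 2 / g * (w ^ 2 + (w ^ 2 + g ^ 2 * (B1 ^ 2 - 2 * B0)))) by (field; lra).
  apply Rmult_lt_0_compat; [apply Rdiv_lt_0_compat|]; nra.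
Qed.

Lemma hopf_conditions_imag_root : hopf_conditions B0 B1 B2 T w g.
Proof.
  pose proof M_char_dlam_imag_root_neq0 as HD0.
  pose proof (M_char_strict_derive (0, w) g) as Hlam.
  pose proof (M_char_derive_gam (0, w) g) as Hgam.
  split; [exact imag_root|].
  split; [exists (M_char_dlam B1 B2 T (0, w) g); split; [apply M_char_derive_lam|exact HD0]|].
  split.
  { destruct (implicit_function_exists _ _ _ _ _ HD0 imag_root Hlam Hgam) as [lam [H0 [Hroot Hd]]].
    exists lam. split; [split; assumption|eexists; exact Hd]. }
  split.
  { intros lam d [H0 Hroot] Hd.
    rewrite (implicit_function_derive _ _ _ _ _ HD0 imag_root Hlam Hgam lam d H0 Hroot Hd).
    apply imag_root_transversality. }
  split; [exact transversality_value_pos|exact imag_root_non_resonance].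
Qed.

End ImaginaryRoot.
End CharacteristicFunction.

Lemma cos_plus_2PI_Z (x : R) (j : Z) : cos (x + 2 * PI * IZR j) = cos x.
Proof.
  rewrite cos_plus.
  assert (Hs : sin (PI * IZR j) = 0) by (apply sin_eq_0_1; exists j; ring).
  replace (2 * PI * IZR j) with (2 * (PI * IZR j)) by ring.
  rewrite sin_2a, cos_2a_sin, Hs. ring.
Qed.

Lemma acos_arg_spec (B0 B1 B2 : R) : 0 < B2 -> B0 ^ 2 < B2 ^ 2 ->
  let Om := (- B1 ^ 2 + sqrt (B1 ^ 2 * (B1 ^ 2 - 4 * B0) + 4 * B2 ^ 2)) / (2 * B2) in
  -1 <= Om <= 1 /\ B2 ^ 2 * (1 - Om ^ 2) = B1 ^ 2 * (B0 + B2 * Om).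
Proof.
  intros HB2 HB Om. set (D := B1 ^ 2 * (B1 ^ 2 - 4 * B0) + 4 * B2 ^ 2) in Om.
  assert (HB0 : - B2 < B0 < B2) by (split; nra).
  assert (HD : 0 <= D) by (unfold D; pose proof (pow2_ge_0 (B1 ^ 2 - 2 * B0)); nra).
  assert (HOm : 2 * B2 * Om + B1 ^ 2 = sqrt D) by (unfold Om; field; lra).
  assert (HsD : sqrt D ^ 2 = D) by (apply pow2_sqrt; exact HD).
  pose proof (sqrt_pos D). pose proof (pow2_ge_0 B1).
  split; [split|].
  - assert (B1 ^ 2 - 2 * B2 <= sqrt D).
    { destruct (Rle_dec (B1 ^ 2 - 2 * B2) 0); [lra|].
      rewrite <- (sqrt_pow2 (B1 ^ 2 - 2 * B2)) by lra. apply sqrt_le_1_alt. unfold D. nra. }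
    nra.
  - assert (sqrt D <= 2 * B2 + B1 ^ 2).
    { rewrite <- (sqrt_pow2 (2 * B2 + B1 ^ 2)) by lra. apply sqrt_le_1_alt. unfold D. nra. }
    nra.
  - assert ((2 * B2 * Om + B1 ^ 2) ^ 2 = D) by (rewrite HOm; exact HsD).
    unfold D in H1. nra.
Qed.

Lemma hopf_case_i_imag_root (B0 B1 B2 T w g : R) : 0 < T -> 0 < B2 ->
  hopf_case_i B0 B1 B2 T w g ->
  0 < w /\ 0 < g /\ B0 ^ 2 < B2 ^ 2 /\ M_char B0 B1 B2 T (0, w) g = 0%C.
Proof.
  intros HT HB2 [HB1 [HB Hi]]. cbv zeta in Hi.
  destruct Hi as [j [th [Hth [Hw [Hw0 [Hs Hg]]]]]].
  assert (HB' : B0 ^ 2 < B2 ^ 2) by lra.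
  destruct (acos_arg_spec B0 B1 B2 HB2 HB') as [HOm Hquad].
  set (Om := (- B1 ^ 2 + sqrt (B1 ^ 2 * (B1 ^ 2 - 4 * B0) + 4 * B2 ^ 2)) / (2 * B2)) in *.
  assert (Hc : cos (2 * T * w) = Om).
  { replace (2 * T * w) with (th + 2 * PI * IZR j) by (rewrite Hw; field; lra).
    rewrite cos_plus_2PI_Z.
    destruct Hth as [-> | ->]; [|rewrite cos_neg]; apply cos_acos; exact HOm. }
  replace (2 * w * T) with (2 * T * w) in Hs, Hg by ring.
  set (s := sin (2 * T * w)) in *.
  assert (Hs0 : s <> 0) by (intros H; rewrite H in Hs; lra).
  assert (Hs2 : s ^ 2 = 1 - Om ^ 2).
  { pose proof (sin2_cos2 (2 * T * w)) as S. unfold Rsqr in S. fold s in S. rewrite Hc in S. nra. }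
  assert (HgB2s : g * B2 * s = B1 * w) by (rewrite Hg; field; lra).
  assert (Hg0 : 0 < g).
  { assert (0 < B2 * s ^ 2) by (apply Rmult_lt_0_compat; [|apply pow2_gt_0]; assumption).
    assert (g * (B2 * s ^ 2) = B1 * s * w)
      by (replace (B1 * s * w) with (s * (B1 * w)) by ring; rewrite <- HgB2s; ring).
    assert (0 < B1 * s * w) by (apply Rmult_lt_0_compat; assumption).
    nra. }
  repeat split; try lra.
  apply M_char_imag_eq0. rewrite Hc. fold s. split.
  - assert (Hsq : g ^ 2 * (B2 ^ 2 * s ^ 2) = B1 ^ 2 * w ^ 2)
      by (replace (B1 ^ 2 * w ^ 2) with ((B1 * w) ^ 2) by ring; rewrite <- HgB2s; ring).
    rewrite Hs2, Hquad in Hsq.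
    assert (g ^ 2 * (B0 + B2 * Om) = w ^ 2).
    { apply Rmult_eq_reg_l with (B1 ^ 2); [|apply pow_nonzero; exact HB1]. rewrite <- Hsq. ring. }
    lra.
  - replace (g ^ 2 * B2 * s) with (g * (g * B2 * s)) by ring. rewrite HgB2s. ring.
Qed.

Lemma hopf_case_ii_imag_root (B0 B1 B2 T w g : R) : 0 < T -> B1 = B0 + 1 ->
  hopf_case_ii B1 B2 T w g ->
  0 < w /\ 0 < g /\ B0 ^ 2 < B2 ^ 2 /\ M_char B0 B1 B2 T (0, w) g = 0%C.
Proof.
  intros HT HB10 [HB1 [HB2 [k [Hk [Hg Hw]]]]].
  assert (HkR : 0 < INR k) by (apply lt_0_INR; exact Hk).
  pose proof PI_RGT_0 as HPI.
  assert (HS : 0 < sqrt (B2 - 1)) by (apply sqrt_lt_R0; lra).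
  assert (HS2 : sqrt (B2 - 1) ^ 2 = B2 - 1) by (apply pow2_sqrt; lra).
  assert (Harg : 2 * T * w = 0 + 2 * INR k * PI) by (rewrite Hw; field; lra).
  repeat split.
  - rewrite Hw. apply Rdiv_lt_0_compat; nra.
  - rewrite Hg. apply Rdiv_lt_0_compat; nra.
  - nra.
  - apply M_char_imag_eq0. rewrite Harg, cos_period, sin_period, cos_0, sin_0, HB1.
    split; [|ring]. rewrite Hg, Hw.
    set (S := sqrt (B2 - 1)) in *.
    replace B0 with (-1) by lra. replace B2 with (S ^ 2 + 1) by lra.
    field. lra.
Qed.

Theorem proposition1 (a b c s0 u0 v0 omega0 gamma0 : R)
  (ha : 0 < a) (hb : 0 < b) (hc : 0 <= c) (hs0 : 1 < s0)
  (hu0 : 0 < u0) (hv0 : 0 < v0)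
  (heq1 : u0 ^ 3 + c * u0 = (a + 1) / b * u0 ^ 2 + a * c / b)
  (heq2 : v0 = u0 ^ 2 + c)
  (hcase : hopf_case_i (b0 b u0 v0) (b1 b u0 v0) (b2 u0 v0) (tau s0) omega0 gamma0
        \/ hopf_case_ii (b1 b u0 v0) (b2 u0 v0) (tau s0) omega0 gamma0) :
  let B0 := b0 b u0 v0 in
  let B1 := b1 b u0 v0 in
  let B2 := b2 u0 v0 in
  let T := tau s0 in
  (* i omega0 is a root of M(., gamma0) *)
  M_char B0 B1 B2 T (0, omega0) gamma0 = 0%C /\
  (* the root is simple: the complex derivative in lambda is nonzero *)
  (exists d : C,
     is_derive (K := C_AbsRing) (V := C_NormedModule)
       (fun lam : C => M_char B0 B1 B2 T lam gamma0) (0, omega0) d /\ d <> 0%C) /\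
  (* transversality: a differentiable root branch through i omega0 exists,
     and along every such branch Re(d lambda / d gamma) at gamma0 equals the
     given formula, which is positive *)
  (exists lam : R -> C, root_branch B0 B1 B2 T omega0 gamma0 lam /\
     exists d : C, is_derive (K := R_AbsRing) (V := C_R_NormedModule) lam gamma0 d) /\
  (forall (lam : R -> C) (d : C), root_branch B0 B1 B2 T omega0 gamma0 lam ->
     is_derive (K := R_AbsRing) (V := C_R_NormedModule) lam gamma0 d ->
     Re d = transversality_value B0 B1 T omega0 gamma0) /\
  0 < transversality_value B0 B1 T omega0 gamma0 /\
  (* non-resonance: n i omega0 is not a root for n not in {1, -1} *)
  (forall n : Z, n <> 1%Z -> n <> (-1)%Z ->
     M_char B0 B1 B2 T (0, IZR n * omega0) gamma0 <> 0%C).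
Proof.
  intros B0 B1 B2 T.
  assert (HT : 0 < T) by (unfold T, tau; lra).
  assert (HB2 : 0 < B2).
  { unfold B2, b2. apply Rdiv_lt_0_compat; [|apply pow_lt; lra].
    assert (0 < u0 ^ 3) by (apply pow_lt; lra). lra. }
  assert (Hroot : 0 < omega0 /\ 0 < gamma0 /\ B0 ^ 2 < B2 ^ 2 /\
                  M_char B0 B1 B2 T (0, omega0) gamma0 = 0%C).
  { destruct hcase as [Hi|Hii].
    - exact (hopf_case_i_imag_root B0 B1 B2 T omega0 gamma0 HT HB2 Hi).
    - exact (hopf_case_ii_imag_root B0 B1 B2 T omega0 gamma0 HT eq_refl Hii). }
  destruct Hroot as [Hw [Hg [HB Hroot]]].
  exact (hopf_conditions_imag_root B0 B1 B2 T omega0 gamma0 HT Hw Hg HB Hroot).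
Qed.
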